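(* Let $q$ be odd, let $C_1,C_2$ be linear codes of length $n$ over $\mathbb{F}_q$, let $C=\{[\mathbf{u}+\mathbf{v},\mathbf{u}-\mathbf{v}] : \mathbf{u}\in C_1,\mathbf{v}\in C_2\}\subseteq\mathbb{F}_q^{2n}$, and let $1\le b\le n$. Then: (a) $d_b(C)\ge\min\{2d_b(C_1),\,d_b(C_2)\}$; (b) $d_b(C)\ge\min\{d_b(C_1),\,2d_b(C_2)\}$; (c) $\min\{d_b(C_1),d_b(C_2)\}\le d_b(C)\le\min\{2d_b(C_1),\,2d_b(C_2)\}$; (d) if there exist $\mathbf{x}\in C_1\cap C_2$ and a hole $H\in\mathbb{H}(\chi_1(\mathbf{x}))$ such that $w_b(\mathbf{x})=\min\{d_b(C_1),d_b(C_2)\}$, $|H|\ge b-1$, and $\{1,n\}\cap H\ne\emptyset$, then $d_b(C)=\min\{d_b(C_1),d_b(C_2)\}$.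
   Context: For $\mathbf{x}\in\mathbb{F}_q^L$ and $1\le b\le L$, $\chi_b(\mathbf{x})=\{i\in\{1,\dots,L\}:(x_i,\dots,x_{i+b-1})\ne\mathbf{0}\}$ with indices mod $L$, $w_b(\mathbf{x})=|\chi_b(\mathbf{x})|$, and for a linear code $C$, $d_b(C)=\min_{\mathbf{0}\ne\mathbf{c}\in C}w_b(\mathbf{c})$; $\chi_1$ is the Hamming support. For $J\subseteq\mathbb{Z}_n=\{1,\dots,n\}$, a hole of $J$ of size $h\ge1$ is a set $\{a+1,\dots,a+h\}\subseteq\mathbb{Z}_n\setminus J$ (indices mod $n$) with $a,a+h+1\in J$; $\mathbb{H}(J)$ is the set of holes of $J$. *)

From HB Require Import structures.
From mathcomp Require Import all_boot all_order all_algebra.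
Set Implicit Arguments. Unset Strict Implicit. Unset Printing Implicit Defensive.
Import GRing.Theory.
Local Open Scope ring_scope.

(* Positions of a vector in F^L are 0-based: position i : 'I_L corresponds to
   index i+1 of the paper; indices are taken mod L. *)

Definition chi (F : finFieldType) (L : nat) (b : nat) (x : 'rV[F]_L) : {set 'I_L} :=
  [set i : 'I_L | [exists k : 'I_b, exists j : 'I_L,
      (((i + k) %% L)%N == j) && (x 0 j != 0)]].

Definition wb (F : finFieldType) (L : nat) (b : nat) (x : 'rV[F]_L) : nat :=
  #|chi b x|.

(* d_b(C) = min over nonzero codewords of w_b; convention: L.+1 (acts as
   +infinity, since every weight is <= L) when C has no nonzero element. *)
Definition db (F : finFieldType) (L : nat) (b : nat) (C : {set 'rV[F]_L}) : nat :=
  \big[minn/L.+1]_(c in C | c != 0) wb b c.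

Definition codeset (F : finFieldType) (n : nat) (U : {vspace 'rV[F]_n}) : {set 'rV[F]_n} :=
  [set c : 'rV[F]_n | c \in U].

Definition pmcode (F : finFieldType) (n : nat) (C1 C2 : {vspace 'rV[F]_n})
  : {set 'rV[F]_(n + n)} :=
  [set w : 'rV[F]_(n + n) | [exists u : 'rV[F]_n, exists v : 'rV[F]_n,
     [&& u \in C1, v \in C2 & w == row_mx (u + v) (u - v)]]].

Definition is_hole (n : nat) (J H : {set 'I_n}) : Prop :=
  exists (a : 'I_n) (h : nat),
    [/\ (1 <= h)%N, a \in J,
        [exists j : 'I_n, (((a + h.+1) %% n)%N == j) && (j \in J)],
        H = [set i : 'I_n | [exists k : 'I_h.+1, (0 < k)%N && (((a + k) %% n)%N == i)]]
      & [disjoint H & J]].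

(* Since 2 is invertible, a position in the support of u or of v lies in the
   support of u + v or of u - v, while [u | u] and [v | -v] carry the support
   of u, resp. v, twice.  Burst weights of a word [y | z] of length 2n are
   compared with those of a word x of length n by folding position i of Z_2n
   onto i mod n: windows fold onto windows, so chi_b([y | z]) is squeezed
   between suitable preimages of chi_b(x).  For (d), a hole of size >= b - 1
   through position 1 or n confines the support of x to an arc of n - b + 1
   positions that does not wrap around; then the windows i and i + n of
   [2x | 0] cannot both meet the support, so folding is injective on
   chi_b([2x | 0]) and w_b([2x | 0]) <= w_b(x). *)

From mathcomp Require Import all_boot all_algebra finfield.
From mathcomp Require Import zify.
Set Implicit Arguments. Unset Strict Implicit.
Import GRing.Theory.
Local Open Scope ring_scope.

Lemma two_neq0 (F : finFieldType) : odd #|F| -> (2%:R : F) != 0.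
Proof.
move=> oddF; apply/negP => char2.
have char2F : (2%N \in [pchar F]) by apply/andP.
move: oddF (finNzRing_gt1 F); rewrite (card_pprimeChar char2F) oddX orbF => /eqP ->.
by rewrite ltnn.
Qed.

Definition ord_shift L (i : 'I_L) k : 'I_L :=
  Ordinal (ltn_pmod (i + k) (leq_ltn_trans (leq0n i) (ltn_ord i))).

Lemma mem_hole n (H : {set 'I_n}) (a : 'I_n) h :
  H = [set i : 'I_n | [exists k : 'I_h.+1, (0 < k)%N && (((a + k) %% n)%N == i)]] ->
  forall i, i \in H -> exists2 k, (0 < k <= h)%N & i = ord_shift a k.
Proof.
move=> -> i; rewrite inE => /existsP[k /andP[k_gt0 /eqP ki]].
by exists k; [rewrite k_gt0 -ltnS ltn_ord | apply: val_inj].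
Qed.

Lemma hole_card_le n (H : {set 'I_n}) (a : 'I_n) h :
  H = [set i : 'I_n | [exists k : 'I_h.+1, (0 < k)%N && (((a + k) %% n)%N == i)]] ->
  (#|H| <= h)%N.
Proof.
move=> /mem_hole memH.
have sub : H \subset [set ord_shift a k.+1 | k : 'I_h].
  apply/subsetP => _ /memH[[|k] //= kh ->]; apply/imsetP.
  by exists (Ordinal kh).
by rewrite -[h in (_ <= h)%N]card_ord (leq_trans (subset_leq_card sub)) ?leq_imset_card.
Qed.

Lemma hole_narrow n b (J H : {set 'I_n}) : is_hole J H -> (b.-1 <= #|H|)%N ->
  [exists i in H, (i == 0%N :> nat) || (i == n.-1 :> nat)] ->
  {in J &, forall s1 s2 : 'I_n, (s1 + b <= n + s2)%N}.
Proof.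
move=> [a [h [_ _ _ HE dis]]] bH /existsP[i /andP[iH i_end]] s1 s2 s1J s2J.
have Hh := hole_card_le HE.
have hole_free k : (0 < k <= h)%N -> ord_shift a k \notin J.
  case/andP=> k0 kh; rewrite (disjointFr dis) // HE inE; apply/existsP.
  by exists (Ordinal (kh : (k < h.+1)%N)); rewrite /= k0 eqxx.
have [c c_range a_c] : exists2 c, (0 < c <= h.+1)%N & ((a + c) %% n = 0)%N.
  have [k kh ik] := mem_hole HE iH; rewrite {}ik /= in i_end.
  case/orP: i_end => /eqP a_k; first by exists k => //; lia.
  exists k.+1; first lia.
  by rewrite addnS -addn1 -modnDml a_k addn1 prednK ?modnn // (leq_ltn_trans _ (ltn_ord a)).
have shift_c t : (t < n)%N -> ((a + (c + t)) %% n = t)%N.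
  by move=> tn; rewrite addnA -modnDml a_c modn_small.
have s2_far : (h < c + s2)%N.
  rewrite ltnNge; apply: contraL s2J => cs2.
  have -> : s2 = ord_shift a (c + s2) by apply/val_inj; rewrite /= shift_c.
  by apply: hole_free; lia.
have s1_near : (c + s1 <= n)%N.
  rewrite leqNgt; apply: contraL s1J => cs1.
  have -> : s1 = ord_shift a (c + s1 - n).
    by apply/val_inj; rewrite /= -modnDr -addnA subnK ?shift_c //; lia.
  by apply: hole_free; have := ltn_ord s1; lia.
lia.
Qed.

Lemma mod_window_gap N b i k1 k2 : (b <= N)%N -> (i < N)%N -> (k1 < b)%N -> (k2 < b)%N ->
  ((i + k1) %% N + b <= (i + k2) %% N)%N -> ((i + k2) %% N + b <= N + (i + k1) %% N)%N -> False.
Proof.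
have wrap x : (N <= x < N + N)%N -> (x %% N = x - N)%N.
  by move=> /andP[Nx xN]; rewrite -{1}(subnK Nx) modnDr modn_small //; lia.
move=> bN iN k1b k2b.
case: (ltnP (i + k1) N) => [/modn_small -> | h1]; last rewrite wrap; try lia;
case: (ltnP (i + k2) N) => [/modn_small -> | h2]; try rewrite wrap; lia.
Qed.

Section Windows.
Variable F : finFieldType.
Implicit Types (L b : nat).

Definition supp L (x : 'rV[F]_L) : {set 'I_L} := [set j | x 0 j != 0].

Lemma supp0 L : supp (0 : 'rV[F]_L) = set0.
Proof. by apply/setP => t; rewrite !inE mxE eqxx. Qed.

Lemma chiP L b (x : 'rV[F]_L) (i : 'I_L) :
  reflect (exists2 k, (k < b)%N & ord_shift i k \in supp x) (i \in chi b x).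
Proof.
rewrite inE; apply: (iffP existsP) => [[k /existsP[j /andP[/eqP ij xj]]] | [k kb xk]].
  by exists k; rewrite // inE (_ : ord_shift _ _ = j) //; apply: val_inj.
by exists (Ordinal kb); apply/existsP; exists (ord_shift i k); rewrite eqxx; rewrite inE in xk.
Qed.

Lemma chi1E L (x : 'rV[F]_L) : chi 1 x = supp x.
Proof.
have shift0 (i : 'I_L) : ord_shift i 0 = i by apply: val_inj; rewrite /= addn0 modn_small.
apply/setP => i; apply/chiP/idP => [[k] | xi]; last by exists 0%N; rewrite ?shift0.
by rewrite ltnS leqn0 => /eqP->; rewrite shift0.
Qed.

Lemma wb_le_len L b (x : 'rV[F]_L) : (wb b x <= L)%N.
Proof. by rewrite /wb -[X in (_ <= X)%N]card_ord max_card. Qed.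

Lemma db_le_wb L b (C : {set 'rV[F]_L}) c : c \in C -> c != 0 -> (db b C <= wb b c)%N.
Proof.
move=> cC c0; rewrite /db -big_filter.
have : c \in [seq c <- index_enum _ | (c \in C) && (c != 0)] by rewrite mem_filter cC c0 mem_index_enum.
elim: (filter _ _) => // c' s IHs; rewrite inE big_cons => /orP[/eqP<- | /IHs].
  exact: geq_minl.
exact: leq_trans (geq_minr _ _).
Qed.

Lemma leq_db_mul L b (C : {set 'rV[F]_L}) m k : (k <= m * L.+1)%N ->
  (forall c, c \in C -> c != 0 -> (k <= m * wb b c)%N) -> (k <= m * db b C)%N.
Proof.
move=> kL kC; rewrite /db; elim/big_ind: _ => // [x y kx ky | c /andP[]]; last exact: kC.
by rewrite /minn; case: ifP.
Qed.

Lemma leq_db L b (C : {set 'rV[F]_L}) k : (k <= L.+1)%N ->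
  (forall c, c \in C -> c != 0 -> (k <= wb b c)%N) -> (k <= db b C)%N.
Proof.
by move=> kL kC; rewrite -[db _ _]mul1n; apply: leq_db_mul => [|c cC c0]; rewrite mul1n ?kC.
Qed.

Lemma db_le_len L b (C : {set 'rV[F]_L}) : (db b C <= L.+1)%N.
Proof.
rewrite /db; elim/big_ind: _ => // [x y xL _ | c _]; first exact: leq_trans (geq_minl x y) xL.
exact: leq_trans (wb_le_len b c) (leqnSn L).
Qed.

Section Halves.
Variables (n b : nat).
Implicit Types (x y z : 'rV[F]_n) (i j : 'I_(n + n)).

Definition fold i : 'I_n := match split i with inl t => t | inr t => t end.

Definition twin i : 'I_(n + n) :=
  match split i with inl t => rshift n t | inr t => lshift n t end.

Lemma fold_lshift t : fold (lshift n t) = t.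
Proof. by rewrite /fold (unsplitK (inl _ _)). Qed.

Lemma fold_rshift t : fold (rshift n t) = t.
Proof. by rewrite /fold (unsplitK (inr _ _)). Qed.

Lemma twin_lshift t : twin (lshift n t) = rshift n t.
Proof. by rewrite /twin (unsplitK (inl _ _)). Qed.

Lemma fold_val i : fold i = (i %% n)%N :> nat.
Proof.
rewrite /fold; case: splitP => t ->; last rewrite modnDl; by rewrite modn_small.
Qed.

Lemma twin_val i : twin i = ((i + n) %% (n + n))%N :> nat.
Proof.
rewrite /twin; case: splitP => t -> /=.
  by rewrite [in RHS]addnC modn_small // ltn_add2l.
by rewrite addnAC modnDl modn_small // ltn_addl.
Qed.

Lemma fold_twin i : fold (twin i) = fold i.
Proof. by apply: val_inj; rewrite /= !fold_val twin_val modn_dvdm ?dvdn_addr // modnDr. Qed.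

Lemma twinK : involutive twin.
Proof.
move=> i; apply: val_inj; rewrite /= !twin_val modnDml -addnA modnDr.
by rewrite modn_small.
Qed.

Lemma fold_split i : i = (if (i < n)%N then fold i : nat else n + fold i)%N :> nat.
Proof. by rewrite /fold; case: splitP => t ->. Qed.

Lemma fold_eq i j : fold i = fold j -> j = i \/ j = twin i.
Proof.
rewrite /fold /twin; case: (split_ordP i) => t ->; case: (split_ordP j) => s -> ->; by [left | right].
Qed.

Lemma fold_shift i k : fold (ord_shift i k) = ord_shift (fold i) k.
Proof. by apply: val_inj; rewrite /= !fold_val modn_dvdm ?dvdn_addr // modnDml. Qed.

Lemma twin_shift i k : twin (ord_shift i k) = ord_shift (twin i) k.
Proof. by apply: val_inj; rewrite /= !twin_val !modnDml addnAC. Qed.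

Lemma row_mxE_fold y z i : row_mx y z 0 i = (if (i < n)%N then y else z) 0 (fold i).
Proof. by rewrite /fold; case: split_ordP => t ->; rewrite ?row_mxEl ?row_mxEr. Qed.

Lemma row_mx_twin y z i : row_mx y z 0 (twin i) = row_mx z y 0 i.
Proof. by rewrite /twin; case: split_ordP => t ->; rewrite ?row_mxEl ?row_mxEr. Qed.

Lemma supp_row_mx y z i :
  (i \in supp (row_mx y z)) = (fold i \in supp (if (i < n)%N then y else z)).
Proof. by rewrite !inE row_mxE_fold; case: (i < n)%N. Qed.

Lemma supp_row_mxU y z i :
  (i \in supp (row_mx y z)) || (i \in supp (row_mx z y)) = (fold i \in supp y :|: supp z).
Proof. by rewrite !supp_row_mx in_setU; case: (i < n)%N; rewrite // orbC. Qed.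

Lemma supp_row_mxI y z i :
  (i \in supp (row_mx y z)) && (i \in supp (row_mx z y)) = (fold i \in supp y :&: supp z).
Proof. by rewrite !supp_row_mx in_setI; case: (i < n)%N; rewrite // andbC. Qed.

Lemma chi_twin y z i : (twin i \in chi b (row_mx y z)) = (i \in chi b (row_mx z y)).
Proof.
suff twin_chi y' z' i' : i' \in chi b (row_mx z' y') -> twin i' \in chi b (row_mx y' z').
  by apply/idP/idP => [/twin_chi | /twin_chi //]; rewrite twinK.
case/chiP=> k kb; rewrite inE => k_in; apply/chiP; exists k => //.
by rewrite -twin_shift inE row_mx_twin.
Qed.

Lemma chi_fold x y z : supp y :|: supp z \subset supp x ->
  chi b (row_mx y z) \subset fold @^-1: chi b x.
Proof.
move=> /subsetP yz_x; apply/subsetP => i /chiP[k kb k_in]; rewrite inE.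
apply/chiP; exists k => //; apply: yz_x; rewrite -fold_shift -supp_row_mxU.
by rewrite k_in.
Qed.

Lemma chi_unfoldU x y z i : supp x \subset supp y :|: supp z -> fold i \in chi b x ->
  (i \in chi b (row_mx y z)) || (twin i \in chi b (row_mx y z)).
Proof.
move=> /subsetP x_yz /chiP[k kb /x_yz]; rewrite -fold_shift -supp_row_mxU chi_twin.
by case/orP => k_in; apply/orP; [left | right]; apply/chiP; exists k.
Qed.

Lemma chi_unfoldI x y z : supp x \subset supp y :&: supp z ->
  fold @^-1: chi b x \subset chi b (row_mx y z).
Proof.
move=> /subsetP x_yz; apply/subsetP => i; rewrite inE => /chiP[k kb /x_yz].
by rewrite -fold_shift -supp_row_mxI => /andP[k_in _]; apply/chiP; exists k.
Qed.

Lemma card_fold_preimset (A : {set 'I_n}) : #|fold @^-1: A| = (2 * #|A|)%N.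
Proof.
rewrite -!sum1_card big_split_ord /= mul2n -addnn.
by congr (_ + _); apply: eq_bigl => t; rewrite inE ?fold_lshift ?fold_rshift.
Qed.

Lemma wb_row_mx_ge x y z : supp x \subset supp y :|: supp z -> (wb b x <= wb b (row_mx y z))%N.
Proof.
move=> x_yz; pose w := row_mx y z.
pose f t := if lshift n t \in chi b w then lshift n t else rshift n t.
have fK : cancel f fold by move=> t; rewrite /f; case: ifP; rewrite ?fold_lshift ?fold_rshift.
rewrite /wb -(card_imset _ (can_inj fK)); apply/subset_leq_card/subsetP => _ /imsetP[t tx ->].
rewrite /f; case: ifPn => // t_notin.
have tx' : fold (lshift n t) \in chi b x by rewrite fold_lshift.
by have /orP[] := chi_unfoldU x_yz tx'; rewrite ?(negPf t_notin) // twin_lshift.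
Qed.

Lemma wb_row_mx_ge_double x y z : supp x \subset supp y :&: supp z ->
  (2 * wb b x <= wb b (row_mx y z))%N.
Proof. by move=> x_yz; rewrite /wb -card_fold_preimset subset_leq_card // chi_unfoldI. Qed.

Lemma wb_row_mx_le_double x y z : supp y :|: supp z \subset supp x ->
  (wb b (row_mx y z) <= 2 * wb b x)%N.
Proof. by move=> yz_x; rewrite /wb -card_fold_preimset subset_leq_card // chi_fold. Qed.

Lemma chi_row_mx0_twin y i : (b <= n)%N ->
  {in supp y &, forall s1 s2 : 'I_n, (s1 + b <= n + s2)%N} ->
  i \in chi b (row_mx y (0 : 'rV[F]_n)) -> twin i \notin chi b (row_mx y 0).
Proof.
move=> bn y_narrow /chiP[k1 k1b k1_in]; rewrite chi_twin; apply/negP => /chiP[k2 k2b k2_in].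
move: k2_in k1_in; rewrite !supp_row_mx; set j1 := ord_shift i k1; set j2 := ord_shift i k2.
have e1 := fold_split j1; have e2 := fold_split j2.
case: (j1 < n)%N e1; case: (j2 < n)%N e2; rewrite ?supp0 ?in_set0 // => e2 e1 y2 y1.
have := y_narrow _ _ y1 y2; have := y_narrow _ _ y2 y1; move: e1 e2 => /=.
set p1 := ((i + k1) %% _)%N; set p2 := ((i + k2) %% _)%N => e1 e2 h21 h12.
by case: (@mod_window_gap (n + n) b i k1 k2); rewrite -/p1 -/p2 //; lia.
Qed.

Lemma wb_row_mx0_le x y : (b <= n)%N ->
  {in supp x &, forall s1 s2 : 'I_n, (s1 + b <= n + s2)%N} -> supp y \subset supp x ->
  (wb b (row_mx y (0 : 'rV[F]_n)) <= wb b x)%N.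
Proof.
move=> bn x_narrow y_x.
have fold_inj : {in chi b (row_mx y (0 : 'rV[F]_n)) &, injective fold}.
  move=> i j iy jy /fold_eq[-> // | jE].
  have := chi_row_mx0_twin bn (sub_in2 (subsetP y_x) x_narrow) iy.
  by rewrite -jE jy.
have y0_x : supp y :|: supp (0 : 'rV[F]_n) \subset supp x by rewrite supp0 setU0.
rewrite /wb -(card_in_imset fold_inj); apply/subset_leq_card/subsetP => _ /imsetP[i iy ->].
by have := subsetP (chi_fold y0_x) i iy; rewrite inE.
Qed.

End Halves.

Lemma supp_opp L (x : 'rV[F]_L) : supp (- x) = supp x.
Proof. by apply/setP => j; rewrite !inE mxE oppr_eq0. Qed.

Lemma suppD_sub L (u v : 'rV[F]_L) : supp (u + v) \subset supp u :|: supp v.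
Proof.
apply/subsetP => j; rewrite !inE mxE; apply: contraLR.
by rewrite negb_or !negbK => /andP[/eqP-> /eqP->]; rewrite addr0.
Qed.

Lemma supp_addsub L (u v : 'rV[F]_L) : (2%:R : F) != 0 ->
  supp u :|: supp v \subset supp (u + v) :|: supp (u - v).
Proof.
move=> two_F; apply/subsetP => j; rewrite !inE !mxE; apply: contraLR.
rewrite negb_or !negbK => /andP[sum0]; rewrite subr_eq0 => /eqP uv.
move: sum0; rewrite uv -mulr2n -mulr_natr mulf_eq0 (negPf two_F) orbF => v0.
by rewrite negb_or v0.
Qed.

End Windows.

Section PlusMinusCode.
Variables (F : finFieldType) (n b : nat) (C1 C2 : {vspace 'rV[F]_n}).
Hypothesis two_F : (2%:R : F) != 0.

Local Notation d1 := (db b (codeset C1)).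
Local Notation d2 := (db b (codeset C2)).
Local Notation d := (db b (pmcode C1 C2)).

Lemma pmcodeP c : reflect (exists u v, [/\ u \in C1, v \in C2 & c = row_mx (u + v) (u - v)])
  (c \in pmcode C1 C2).
Proof.
rewrite inE; apply: (iffP existsP) => [[u /existsP[v /and3P[uC vC /eqP->]]] | [u [v [uC vC ->]]]].
  by exists u, v.
by exists u; apply/existsP; exists v; rewrite uC vC eqxx.
Qed.

Lemma pmcode_mem u v : u \in C1 -> v \in C2 -> row_mx (u + v) (u - v) \in pmcode C1 C2.
Proof. by move=> uC vC; apply/pmcodeP; exists u, v. Qed.

Lemma wb_pm_ge_l u v : u \in C1 -> u != 0 -> (d1 <= wb b (row_mx (u + v) (u - v)))%N.
Proof.
move=> uC u0; rewrite (leq_trans (db_le_wb _ _ u0)) ?inE // wb_row_mx_ge //.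
exact: subset_trans (subsetUl _ _) (supp_addsub _ _ two_F).
Qed.

Lemma wb_pm_ge_r u v : v \in C2 -> v != 0 -> (d2 <= wb b (row_mx (u + v) (u - v)))%N.
Proof.
move=> vC v0; rewrite (leq_trans (db_le_wb _ _ v0)) ?inE // wb_row_mx_ge //.
exact: subset_trans (subsetUr _ _) (supp_addsub _ _ two_F).
Qed.

Lemma wb_pmcode_ge_l c : c \in pmcode C1 C2 -> c != 0 -> (minn (2 * d1) d2 <= wb b c)%N.
Proof.
case/pmcodeP=> u [v [uC vC ->]]; have [-> | v0] := eqVneq v 0; last first.
  by move=> _; rewrite geq_min wb_pm_ge_r ?orbT.
rewrite addr0 subr0 row_mx_eq0 andbb => u0; rewrite geq_min; apply/orP; left.
apply: leq_trans (_ : 2 * wb b u <= _)%N; first by rewrite leq_mul2l db_le_wb ?inE.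
by apply: wb_row_mx_ge_double; rewrite setIid.
Qed.

Lemma wb_pmcode_ge_r c : c \in pmcode C1 C2 -> c != 0 -> (minn d1 (2 * d2) <= wb b c)%N.
Proof.
case/pmcodeP=> u [v [uC vC ->]]; have [-> | u0] := eqVneq u 0; last first.
  by move=> _; rewrite geq_min wb_pm_ge_l.
rewrite add0r sub0r row_mx_eq0 oppr_eq0 andbb => v0; rewrite geq_min; apply/orP; right.
apply: leq_trans (_ : 2 * wb b v <= _)%N; first by rewrite leq_mul2l db_le_wb ?inE.
by apply: wb_row_mx_ge_double; rewrite supp_opp setIid.
Qed.

Lemma db_pm_ge_l : (minn (2 * d1) d2 <= d)%N.
Proof.
apply: leq_db; last exact: wb_pmcode_ge_l.
by rewrite geq_min (leq_trans (db_le_len _ _)) ?orbT // ltnS leq_addl.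
Qed.

Lemma db_pm_ge_r : (minn d1 (2 * d2) <= d)%N.
Proof.
apply: leq_db; last exact: wb_pmcode_ge_r.
by rewrite geq_min (leq_trans (db_le_len _ _)) // ltnS leq_addl.
Qed.

Lemma db_pm_le_l : (d <= 2 * d1)%N.
Proof.
apply: leq_db_mul => [|u]; first by rewrite (leq_trans (db_le_len _ _)) // mul2n doubleS addnn.
rewrite inE => uC u0; have := pmcode_mem uC (mem0v C2); rewrite addr0 subr0 => uuC.
rewrite (leq_trans (db_le_wb _ uuC _)) ?row_mx_eq0 ?andbb //.
by apply: wb_row_mx_le_double; rewrite setUid.
Qed.

Lemma db_pm_le_r : (d <= 2 * d2)%N.
Proof.
apply: leq_db_mul => [|v]; first by rewrite (leq_trans (db_le_len _ _)) // mul2n doubleS addnn.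
rewrite inE => vC v0; have := pmcode_mem (mem0v C1) vC; rewrite add0r sub0r => vvC.
rewrite (leq_trans (db_le_wb _ vvC _)) ?row_mx_eq0 ?oppr_eq0 ?andbb //.
by apply: wb_row_mx_le_double; rewrite supp_opp setUid.
Qed.

Lemma db_pm_le_narrow x : (b <= n)%N -> x \in C1 -> x \in C2 -> x != 0 ->
  {in supp x &, forall s1 s2 : 'I_n, (s1 + b <= n + s2)%N} -> (d <= wb b x)%N.
Proof.
move=> bn xC1 xC2 x0 x_narrow; have := pmcode_mem xC1 xC2; rewrite subrr => xxC.
have xx0 : row_mx (x + x) (0 : 'rV[F]_n) != 0.
  by rewrite row_mx_eq0 negb_and -mulr2n -scaler_nat scaler_eq0 (negPf two_F) x0.
apply: leq_trans (db_le_wb _ xxC xx0) _; apply: wb_row_mx0_le => //.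
by rewrite (subset_trans (suppD_sub _ _)) ?setUid.
Qed.

End PlusMinusCode.

Theorem mainTheorem11 (F : finFieldType) (n : nat) (C1 C2 : {vspace 'rV[F]_n}) (b : nat) :
  odd #|F| -> (1 <= b <= n)%N ->
  [/\ (minn (2 * db b (codeset C1)) (db b (codeset C2)) <= db b (pmcode C1 C2))%N,
      (minn (db b (codeset C1)) (2 * db b (codeset C2)) <= db b (pmcode C1 C2))%N,
      ((minn (db b (codeset C1)) (db b (codeset C2)) <= db b (pmcode C1 C2))%N
        /\ (db b (pmcode C1 C2) <= minn (2 * db b (codeset C1)) (2 * db b (codeset C2)))%N)
    & (exists (x : 'rV[F]_n) (H : {set 'I_n}),
          [/\ x \in C1, x \in C2, is_hole (chi 1 x) H
            & wb b x = minn (db b (codeset C1)) (db b (codeset C2)) /\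
              (b.-1 <= #|H|)%N /\
              [exists i in H, (i == 0%N :> nat) || (i == n.-1 :> nat)]]) ->
      db b (pmcode C1 C2) = minn (db b (codeset C1)) (db b (codeset C2))].
Proof.
move=> oddF /andP[_ bn]; have two_F := two_neq0 oddF.
have ge_min : (minn (db b (codeset C1)) (db b (codeset C2)) <= db b (pmcode C1 C2))%N.
  apply: leq_trans _ (db_pm_ge_l b C1 C2 two_F).
  by rewrite leq_min geq_minr andbT (leq_trans (geq_minl _ _)) // leq_pmull.
split; [exact: db_pm_ge_l | exact: db_pm_ge_r | split => // |].
  by rewrite leq_min db_pm_le_l ?db_pm_le_r.
case=> x [H [xC1 xC2 hole [wx [bH H_end]]]].
apply/eqP; rewrite eqn_leq ge_min andbT -wx; rewrite chi1E in hole.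
apply: db_pm_le_narrow => //; last exact: hole_narrow hole bH H_end.
by case: hole => a [h [_ + _ _ _]]; rewrite inE; apply: contraNneq => ->; rewrite mxE.
Qed.
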